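(* Let the data $(I,1,c,\{h_a\},S,\{d_a\},\{\chi_a\})$ be as in the context, and fix an integer $n\ge 1$. For $x,y>0$ define $$\mathcal{T}_1(n;x,y)=\frac{\chi_1\!\left(ix+\tfrac1n\right)\,\chi_1\!\left(iy-\tfrac1n\right)}{\chi_1(ix)\,\chi_1(iy)} .$$ Assume $\sum_{a\in I} d_a^2\theta_a^n\neq 0$. Then, as $x\to\infty$ and $y\to 0^+$ (independently), $\mathcal{T}_1(n;x,y)\neq 0$ for all sufficiently large $x$ and small $y$, and $$\frac{\mathcal{T}_1(n;x,y)}{|\mathcal{T}_1(n;x,y)|}\;\longrightarrow\; e^{-2\pi i\left(\frac{2}{n}+n\right)\frac{c}{24}}\;\zeta_n,\qquad \zeta_n:=\frac{\sum_{a} d_a^2\theta_a^n}{\bigl|\sum_a d_a^2\theta_a^n\bigr|}.$$ In other words, $\mathcal{T}_1(n;x,y)$ is asymptotically a positive real multiple of $e^{-2\pi i(\frac2n+n)\frac{c}{24}}\sum_a d_a^2\theta_a^n$.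
   Context: Physical interpretation (not needed for the mathematics): $\mathcal{T}_1$ models the expectation value of rotating half of a cylinder by angle $2\pi/n$, with $x=\xi_l/L$, $y=\xi_r/L$. Data: $I$ is a finite index set with a distinguished element $1$. $c\in\mathbb{R}$. Real numbers $h_a$ ($a\in I$) with $h_1=0$ and $h_a>0$ for $a\neq 1$; set $\theta_a=e^{2\pi i h_a}$. Positive reals $d_a$ ($a\in I$) and $\mathcal{D}=\sqrt{\sum_a d_a^2}$. $S=(S_{ab})_{a,b\in I}$ is a complex matrix with $S_{a1}=S_{1a}=d_a/\mathcal{D}$ for all $a$. $T$ is the diagonal matrix $T_{ab}=\delta_{ab}e^{2\pi i(h_a-c/24)}$. The functions $\chi_a$ ($a\in I$) are holomorphic on the upper half-plane $\mathbb{H}$ and have absolutely convergent expansions $\chi_a(\tau)=\sum_{k\ge 0}N_{a,k}\,e^{2\pi i\tau(h_a-c/24+k)}$ with nonnegative integers $N_{a,k}$, $N_{a,0}\ge1$ and $N_{1,0}=1$; they satisfy the modular covariance $\chi_a(-1/\tau)=\sum_b S_{ab}\chi_b(\tau)$ and $\chi_a(\tau+1)=e^{2\pi i(h_a-c/24)}\chi_a(\tau)$ for all $\tau\in\mathbb{H}$. *)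

From Stdlib Require Import Reals List.
From Coquelicot Require Import Coquelicot.
Open Scope R_scope.

Definition Cexp (z : C) : C :=
  (exp (Re z) * cos (Im z), exp (Re z) * sin (Im z)).

Definition e2pii (z : C) : C := Cexp (2 * PI * Ci * z)%C.

Definition CsumI (m : nat) (f : nat -> C) : C :=
  fold_right Cplus (RtoC 0) (map f (seq 0 m)).
Definition RsumI (m : nat) (f : nat -> R) : R :=
  fold_right Rplus 0 (map f (seq 0 m)).

(* T_1(n; x, y) = chi_1(ix + 1/n) chi_1(iy - 1/n) / (chi_1(ix) chi_1(iy)),
   with the vacuum label 1 encoded as index 0. *)
Definition T1 (chi1 : C -> C) (n : nat) (x y : R) : C :=
  (chi1 (Ci * RtoC x + RtoC (/ INR n)) * chi1 (Ci * RtoC y - RtoC (/ INR n))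
   / (chi1 (Ci * RtoC x) * chi1 (Ci * RtoC y)))%C.

From Stdlib Require Import Reals List Lra Lia.
From Coquelicot Require Import Coquelicot.
Open Scope R_scope.

(* The vacuum label is 0.  Put q = e^{2 pi i s} and g_a(s) = q^{c/24} chi_a(s).  Since
   h_0 = 0 with multiplicity N_{0,0} = 1 and h_a > 0 otherwise, the absolutely convergent
   q-expansions give g_a(s) -> delta_{a,0} as Im s -> +oo, with exponential error bounds.
   The four characters in T_1 are brought to points near the cusp i*oo:
     chi_0(ix + 1/n), chi_0(ix)  directly (x -> +oo);
     chi_0(iy)        = sum_b S_{0b} chi_b(i/y)                             (S);
     chi_0(iy - 1/n)  = e^{-2 pi i n c/24} sum_b S_{0b} theta_b^n sum_b' S_{bb'} chi_b'(s_y),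
                        s_y = 1/n + i/(n^2 y)                               (S T^n S).
   Collecting the automorphy factors q^{-c/24} yields
     T_1 = e^{-2 pi i (2/n + n) c/24} * w(y) * R(x, y)   with w(y) > 0,
   and R(x, y) -> (sum_b S_{0b} theta_b^n S_{b0}) / S_{00} = Z / (D d_0), a positive
   multiple of Z = sum_a d_a^2 theta_a^n.  Continuity of the phase z/|z| at Z <> 0 ends
   the proof. *)

Ltac C_components :=
  unfold Cminus, Cdiv, Cplus, Cmult, Copp, Cinv, RtoC, Ci; simpl; f_equal.

Lemma e2pii_eq (z : C) :
  e2pii z = (exp (-(2*PI*Im z)) * cos (2*PI*Re z), exp (-(2*PI*Im z)) * sin (2*PI*Re z)).
Proof. destruct z as [a b]. unfold e2pii, Cexp. simpl. f_equal; f_equal; f_equal; ring. Qed.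

Lemma e2pii_plus (z w : C) : e2pii (z + w) = (e2pii z * e2pii w)%C.
Proof.
  rewrite !e2pii_eq. destruct z as [a b], w as [a' b']. simpl.
  replace (-(2*PI*(b+b'))) with (-(2*PI*b) + -(2*PI*b')) by ring.
  replace (2*PI*(a+a')) with (2*PI*a + 2*PI*a') by ring.
  rewrite exp_plus, cos_plus, sin_plus. unfold Cmult; simpl. f_equal; ring.
Qed.

Lemma e2pii_0 : e2pii (RtoC 0) = RtoC 1.
Proof.
  rewrite e2pii_eq. simpl. rewrite Rmult_0_r, Ropp_0, exp_0, cos_0, sin_0.
  C_components; ring.
Qed.

Lemma Cmod_e2pii (z : C) : Cmod (e2pii z) = exp (-(2*PI*Im z)).
Proof.
  rewrite e2pii_eq. unfold Cmod. cbn [fst snd].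
  set (E := exp _). set (t := 2*PI*Re z).
  replace ((E * cos t) ^ 2 + (E * sin t) ^ 2) with (E * E).
  - apply sqrt_square. left; apply exp_pos.
  - pose proof (sin2_cos2 t) as H. unfold Rsqr in H.
    transitivity (E*E*(sin t * sin t + cos t * cos t)); [rewrite H|]; ring.
Qed.

Lemma e2pii_neq0 (z : C) : e2pii z <> RtoC 0.
Proof.
  intro H. assert (Hmod : Cmod (e2pii z) = 0) by (rewrite H; apply Cmod_0).
  rewrite Cmod_e2pii in Hmod. pose proof (exp_pos (-(2*PI*Im z))). lra.
Qed.

Lemma e2pii_imag (t : R) : e2pii (Ci * RtoC t) = RtoC (exp (-(2*PI*t))).
Proof.
  rewrite e2pii_eq. simpl. replace (2*PI*(0*t - 1*0)) with 0 by ring.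
  replace (0*0 + 1*t) with t by ring. rewrite cos_0, sin_0. C_components; ring.
Qed.

Lemma e2pii_mul_opp (s : C) (r : R) :
  (e2pii (s * RtoC r) * e2pii (s * RtoC (- r)))%C = RtoC 1.
Proof. rewrite <- e2pii_plus, <- e2pii_0. f_equal. destruct s; C_components; ring. Qed.

Lemma Cpow_e2pii (z : C) (k : nat) : Cpow (e2pii z) k = e2pii (z * RtoC (INR k)).
Proof.
  induction k as [|k IH]; simpl Cpow.
  - rewrite <- e2pii_0. f_equal. destruct z; C_components; ring.
  - rewrite IH, <- e2pii_plus, S_INR. f_equal. destruct z; C_components; ring.
Qed.

Lemma RtoC_neq0 (x : R) : x <> 0 -> RtoC x <> RtoC 0.
Proof. intros H E. apply H. injection E. auto. Qed.

Lemma Im_mult_RtoC (z : C) (r : R) : Im (z * RtoC r) = Im z * r.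
Proof. destruct z; simpl; ring. Qed.

Lemma Im_oppinv (z : C) : 0 < Im z -> 0 < Im (- / z)%C.
Proof.
  destruct z as [a b]. simpl. intro Hb. assert (0 < a*a + b*b) by nra.
  replace (- (- b / (a * (a * 1) + b * (b * 1)))) with (b / (a*a + b*b)) by (field; lra).
  apply Rdiv_lt_0_compat; lra.
Qed.

Lemma exp_monotone (x y : R) : x <= y -> exp x <= exp y.
Proof. intros [Hlt|Heq]; [left; apply exp_increasing; exact Hlt|subst; lra]. Qed.

Section ComplexLimits.
Context {T : Type} (F : (T -> Prop) -> Prop) {FF : Filter F}.

Lemma lim_ball (f : T -> C) (l : C) :
  filterlim f F (locally l) <-> (forall eps : posreal, F (fun t => Cmod (f t - l)%C < eps)).
Proof. exact (filterlim_locally_ball_norm (K := C_AbsRing) (U := C_NormedModule) f l). Qed.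

Lemma lim_plus (f g : T -> C) (a b : C) :
  filterlim f F (locally a) -> filterlim g F (locally b) ->
  filterlim (fun t => f t + g t)%C F (locally (a + b)%C).
Proof.
  intros Hf Hg.
  exact (filterlim_comp_2 f g Cplus Hf Hg (filterlim_plus (K := C_AbsRing) (V := C_NormedModule) a b)).
Qed.

(* Continuity of the product, via
   |fg - ab| <= |f - a| |g - b| + |a| |g - b| + |f - a| |b|. *)
Lemma lim_mult (f g : T -> C) (a b : C) :
  filterlim f F (locally a) -> filterlim g F (locally b) ->
  filterlim (fun t => f t * g t)%C F (locally (a * b)%C).
Proof.
  intros Hf Hg. apply lim_ball. intro eps. pose proof (cond_pos eps) as He.
  set (K := 1 + Cmod a + Cmod b).
  pose proof (Cmod_ge_0 a). pose proof (Cmod_ge_0 b).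
  assert (HK : 1 <= K) by (unfold K; lra).
  set (delta := Rmin 1 (eps / K)).
  assert (Hdelta : 0 < delta) by (apply Rmin_pos; [lra|apply Rdiv_lt_0_compat; lra]).
  assert (HdK : delta * K <= eps).
  { apply (Rmult_le_reg_r (/ K)); [apply Rinv_0_lt_compat; lra|].
    rewrite Rmult_assoc, Rinv_r, Rmult_1_r by lra. apply Rmin_r. }
  pose proof (Rmin_l 1 (eps / K)) as Hd1. fold delta in Hd1.
  eapply filter_imp; [|exact (filter_and _ _ (proj1 (lim_ball f a) Hf (mkposreal _ Hdelta))
                                         (proj1 (lim_ball g b) Hg (mkposreal _ Hdelta)))].
  intros t [Hfa Hgb]. simpl in Hfa, Hgb.
  replace (f t * g t - a * b)%C with ((f t - a) * (g t - b) + a * (g t - b) + (f t - a) * b)%C by ring.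
  eapply Rle_lt_trans; [eapply Rle_trans; [apply Cmod_triangle|apply Rplus_le_compat_r, Cmod_triangle]|].
  rewrite !Cmod_mult.
  pose proof (Cmod_ge_0 (f t - a)%C). pose proof (Cmod_ge_0 (g t - b)%C).
  assert (Cmod (f t - a)%C * Cmod (g t - b)%C < delta) by nra.
  assert (Cmod a * Cmod (g t - b)%C <= Cmod a * delta) by (apply Rmult_le_compat_l; lra).
  assert (Cmod (f t - a)%C * Cmod b <= delta * Cmod b) by (apply Rmult_le_compat_r; lra).
  unfold K in HdK. nra.
Qed.

Lemma lim_Cmod (f : T -> C) (l : C) : filterlim f F (locally l) ->
  filterlim (fun t => Cmod (f t)) F (locally (Cmod l)).
Proof.
  intro Hf. eapply filterlim_comp; [exact Hf|]. exact (filterlim_norm (K := C_AbsRing) (V := C_NormedModule) l).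
Qed.

Lemma lim_RtoC (f : T -> R) (l : R) : filterlim f F (locally l) ->
  filterlim (fun t => RtoC (f t)) F (locally (RtoC l)).
Proof.
  intro Hf. apply lim_ball. intro eps.
  eapply filter_imp; [|exact (proj1 (filterlim_locally_ball_norm (K := R_AbsRing) (U := R_NormedModule) f l) Hf eps)].
  intros t Ht. rewrite <- RtoC_minus, Cmod_R. exact Ht.
Qed.

Lemma lim_dominated (f : T -> C) (l : C) (b : T -> R) :
  F (fun t => Cmod (f t - l)%C <= b t) -> filterlim b F (locally 0) ->
  filterlim f F (locally l).
Proof.
  intros Hdom Hb. apply lim_ball. intro eps.
  eapply filter_imp; [|exact (filter_and _ _ Hdom
     (proj1 (filterlim_locally_ball_norm (K := R_AbsRing) (U := R_NormedModule) b 0) Hb eps))].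
  intros t [Hle Hlt]. change (Rabs (b t + - 0) < eps) in Hlt.
  rewrite Ropp_0, Rplus_0_r in Hlt. pose proof (Rle_abs (b t)). lra.
Qed.

Lemma lim_neq0 (f : T -> C) (l : C) : filterlim f F (locally l) -> l <> RtoC 0 ->
  F (fun t => f t <> RtoC 0).
Proof.
  intros Hf Hl. apply Cmod_gt_0 in Hl.
  eapply filter_imp; [|exact (proj1 (lim_ball f l) Hf (mkposreal (Cmod l) Hl))].
  intros t Ht Hzero. simpl in Ht. rewrite Hzero in Ht.
  replace (RtoC 0 - l)%C with (- l)%C in Ht by ring. rewrite Cmod_opp in Ht. lra.
Qed.

(* Continuity of z |-> 1/z away from 0, via |1/z - 1/l| = |z - l| / (|z| |l|). *)
Lemma lim_inv (f : T -> C) (l : C) : filterlim f F (locally l) -> l <> RtoC 0 ->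
  filterlim (fun t => / f t)%C F (locally (/ l)%C).
Proof.
  intros Hf Hl. apply lim_ball. intro eps. pose proof (cond_pos eps) as He.
  pose proof (proj1 (Cmod_gt_0 l) Hl) as Hr. set (r := Cmod l) in *.
  assert (Hdelta : 0 < Rmin (r/2) (eps*r*r/2)).
  { apply Rmin_pos; [lra|]. pose proof (Rmult_lt_0_compat _ _ (Rmult_lt_0_compat _ _ He Hr) Hr). lra. }
  eapply filter_imp; [|exact (proj1 (lim_ball f l) Hf (mkposreal _ Hdelta))].
  intros t Ht. simpl in Ht.
  pose proof (Rmin_l (r/2) (eps*r*r/2)). pose proof (Rmin_r (r/2) (eps*r*r/2)).
  assert (Hfar : r/2 < Cmod (f t)).
  { pose proof (Cmod_triangle (f t) (l - f t)%C) as Htri.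
    replace (f t + (l - f t))%C with l in Htri by ring.
    replace (l - f t)%C with (- (f t - l))%C in Htri by ring. rewrite Cmod_opp in Htri.
    fold r in Htri. lra. }
  assert (Hft : f t <> RtoC 0) by (intro E; rewrite E, Cmod_0 in Hfar; lra).
  replace (/ f t - / l)%C with (- (f t - l) / (f t * l))%C by (field; auto).
  rewrite Cmod_div by (apply Cmult_neq_0; auto).
  rewrite Cmod_opp, Cmod_mult. fold r.
  apply Rlt_div_l; [apply Rmult_lt_0_compat; lra|].
  assert (eps * (r/2) * r < eps * Cmod (f t) * r).
  { apply Rmult_lt_compat_r; [lra|]. apply Rmult_lt_compat_l; lra. }
  lra.
Qed.

Definition phase (z : C) : C := (z / RtoC (Cmod z))%C.

Lemma lim_phase (f : T -> C) (l : C) : filterlim f F (locally l) -> l <> RtoC 0 ->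
  filterlim (fun t => phase (f t)) F (locally (phase l)).
Proof.
  intros Hf Hl. apply lim_mult; [exact Hf|]. apply lim_inv.
  - apply lim_RtoC, lim_Cmod, Hf.
  - intro E. apply Hl, Cmod_eq_0. injection E. auto.
Qed.

End ComplexLimits.

Lemma phase_scale (u z : C) (p : R) : Cmod u = 1 -> 0 < p -> z <> RtoC 0 ->
  phase (u * RtoC p * z)%C = (u * phase z)%C.
Proof.
  intros Hu Hp Hz. unfold phase.
  rewrite !Cmod_mult, Hu, Cmod_R, Rabs_pos_eq, Rmult_1_l, RtoC_mult by lra.
  assert (RtoC (Cmod z) <> RtoC 0) by (apply RtoC_neq0, Rgt_not_eq, Cmod_gt_0, Hz).
  field. split; [assumption|apply RtoC_neq0; lra].
Qed.

Lemma phase_pos_scale (z : C) (p : R) : 0 < p -> z <> RtoC 0 -> phase (RtoC p * z)%C = phase z.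
Proof.
  intros Hp Hz. rewrite <- (Cmult_1_l (RtoC p)), phase_scale, Cmult_1_l; [reflexivity| |exact Hp|exact Hz].
  rewrite Cmod_R. apply Rabs_R1.
Qed.

Definition at_cusp (P : C -> Prop) : Prop := exists M : R, forall s, M < Im s -> P s.

Global Instance at_cusp_filter : Filter at_cusp.
Proof.
  constructor.
  - exists 0. auto.
  - intros P Q [M1 H1] [M2 H2]. exists (Rmax M1 M2). intros s Hs.
    pose proof (Rmax_l M1 M2). pose proof (Rmax_r M1 M2).
    split; [apply H1|apply H2]; lra.
  - intros P Q HPQ [M H]. exists M. auto.
Qed.

Lemma Im_at_cusp : filterlim Im at_cusp (Rbar_locally p_infty).
Proof. intros P [M HM]. exists M. auto. Qed.

Lemma at_cusp_of_Im {T : Type} (F : (T -> Prop) -> Prop) {FF : Filter F} (sg : T -> C) :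
  filterlim (fun t => Im (sg t)) F (Rbar_locally p_infty) -> filterlim sg F at_cusp.
Proof.
  intros HIm P [M HM]. apply (filter_imp (F := F) (fun t => M < Im (sg t))).
  - intros t Ht. exact (HM _ Ht).
  - apply (HIm (fun x => M < x)). exists M. auto.
Qed.

Lemma scale_at_right (k : R) : 0 < k -> filterlim (fun y => k * y) (at_right 0) (at_right 0).
Proof.
  intros Hk P [eps HP]. exists (mkposreal (eps / k) (Rdiv_lt_0_compat _ _ (cond_pos eps) Hk)).
  intros y Hy Hpos. simpl in Hy. apply HP; [|apply Rmult_lt_0_compat; lra].
  unfold ball in *; simpl in *. unfold AbsRing_ball, abs, minus, plus, opp in *; simpl in *.
  rewrite Ropp_0, Rplus_0_r in *. rewrite Rabs_pos_eq in * by lra. rewrite Rabs_pos_eq by nra.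
  replace (pos eps) with (k * (eps / k)) by (field; lra). apply Rmult_lt_compat_l; lra.
Qed.

Lemma exp_decay_limit (K r : R) : 0 < r ->
  filterlim (fun x => K * exp (- (r * (x - 1)))) (Rbar_locally p_infty) (locally 0).
Proof.
  intro Hr.
  assert (Haffine : is_lim (fun x => - (r * (x - 1))) p_infty m_infty).
  { intros P [M HM]. exists (1 + Rabs M / r). intros x Hx. apply HM.
    assert (Rabs M < r * (x - 1)).
    { replace (Rabs M) with (r * (Rabs M / r)) by (field; lra). apply Rmult_lt_compat_l; lra. }
    pose proof (Rle_abs (- M)). rewrite Rabs_Ropp in *. lra. }
  assert (Hexp : is_lim (fun x => exp (- (r * (x - 1)))) p_infty 0).
  { eapply is_lim_comp; [exact is_lim_exp_m|exact Haffine|]. exists 0. discriminate. }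
  pose proof (is_lim_scal_l _ K _ _ Hexp) as Hlim. simpl in Hlim. rewrite Rmult_0_r in Hlim.
  exact Hlim.
Qed.

Lemma series_norm_le (a : nat -> C) (b : nat -> R) (l : C) (L : R) :
  is_series a l -> is_series b L -> (forall k, Cmod (a k) <= b k) -> Cmod l <= L.
Proof.
  intros Ha Hb Hab.
  assert (Hpartial : forall n, Cmod (sum_n a n) <= sum_n b n).
  { intro n. eapply Rle_trans; [apply (norm_sum_n_m a 0 n)|]. apply sum_n_m_le. intro k. apply Hab. }
  assert (Hnorm : is_lim_seq (fun n => Cmod (sum_n a n)) (Cmod l)).
  { eapply filterlim_comp; [exact Ha|]. exact (filterlim_norm (K := C_AbsRing) (V := C_NormedModule) l). }
  exact (is_lim_seq_le _ _ _ _ Hpartial Hnorm (Hb : is_lim_seq (sum_n b) L)).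
Qed.

Definition qterm (NN : nat -> nat) (hh c : R) (tau : C) (k : nat) : C :=
  (RtoC (INR (NN k)) * e2pii (tau * RtoC (hh - c / 24 + INR k)))%C.

Definition has_qexpansion (NN : nat -> nat) (hh c : R) (f : C -> C) : Prop :=
  forall tau, 0 < Im tau ->
    is_series (qterm NN hh c tau) (f tau) /\ ex_series (fun k => Cmod (qterm NN hh c tau k)).

Lemma qterm_bound (NN : nat -> nat) (hh c : R) (s : C) (k : nat) : 0 <= hh -> 1 <= Im s ->
  Cmod (e2pii (s * RtoC (c/24)) * qterm NN hh c s k)%C <=
  Cmod (qterm NN hh c Ci k) * exp (-(2*PI*(c/24))) * exp (- (2*PI*hh * (Im s - 1))).
Proof.
  intros Hhh Hs. unfold qterm.
  rewrite !Cmod_mult, !Cmod_e2pii, !Im_mult_RtoC, Cmod_R, Rabs_pos_eq by apply pos_INR.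
  simpl (Im Ci).
  rewrite Rmult_comm, !Rmult_assoc. apply Rmult_le_compat_l; [apply pos_INR|].
  rewrite <- !exp_plus. apply exp_monotone.
  pose proof PI_RGT_0. pose proof (pos_INR k).
  assert (0 <= (Im s - 1) * INR k) by (apply Rmult_le_pos; lra). nra.
Qed.

Lemma qexpansion_vanishes_at_cusp (NN : nat -> nat) (hh c : R) (f : C -> C) :
  0 < hh -> has_qexpansion NN hh c f ->
  filterlim (fun s => e2pii (s * RtoC (c/24)) * f s)%C at_cusp (locally (RtoC 0)).
Proof.
  intros Hhh Hf. destruct (Hf Ci) as [_ Habs]; [simpl; lra|].
  set (K := Series (fun k => Cmod (qterm NN hh c Ci k)) * exp (-(2*PI*(c/24)))).
  apply (lim_dominated _ _ _ (fun s => K * exp (- (2*PI*hh * (Im s - 1))))).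
  - exists 1. intros s Hs. replace (_ - RtoC 0)%C with (e2pii (s * RtoC (c/24)) * f s)%C by ring.
    eapply series_norm_le.
    + apply (is_series_scal_l (K := C_AbsRing) (V := C_NormedModule)). apply Hf. lra.
    + apply is_series_scal_r, is_series_scal_r, Series_correct, Habs.
    + intro k. apply qterm_bound; lra.
  - apply (filterlim_comp _ _ _ Im (fun x => K * exp (- (2*PI*hh * (x - 1)))) _ (Rbar_locally p_infty)).
    + exact Im_at_cusp.
    + apply exp_decay_limit. pose proof PI_RGT_0. nra.
Qed.

Lemma qexpansion_drop_leading (NN : nat -> nat) (c : R) (f : C -> C) :
  NN 0%nat = 1%nat -> has_qexpansion NN 0 c f ->
  has_qexpansion (fun k => NN (S k)) 1 c (fun s => f s - e2pii (s * RtoC (- (c/24))))%C.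
Proof.
  intros HN Hf tau Ht. destruct (Hf tau Ht) as [Hs Habs].
  assert (Hshift : forall k, qterm NN 0 c tau (S k) = qterm (fun k => NN (S k)) 1 c tau k).
  { intro k. unfold qterm. rewrite S_INR. do 4 f_equal. ring. }
  assert (Hlead : qterm NN 0 c tau 0 = e2pii (tau * RtoC (- (c/24)))).
  { unfold qterm. rewrite HN. simpl INR. rewrite Cmult_1_l. do 3 f_equal. ring. }
  split.
  - apply (is_series_ext _ _ _ Hshift). apply is_series_incr_1.
    rewrite Hlead. change (plus ?x ?y) with (x + y)%C.
    replace (f tau - e2pii (tau * RtoC (- (c/24))) + e2pii (tau * RtoC (- (c/24))))%C
      with (f tau) by ring.
    exact Hs.
  - apply (ex_series_ext _ _ (fun k => f_equal Cmod (Hshift k))).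
    exact (proj1 (ex_series_incr_1 (K := R_AbsRing) _) Habs).
Qed.

Lemma qexpansion_vacuum_limit (NN : nat -> nat) (c : R) (f : C -> C) :
  NN 0%nat = 1%nat -> has_qexpansion NN 0 c f ->
  filterlim (fun s => e2pii (s * RtoC (c/24)) * f s)%C at_cusp (locally (RtoC 1)).
Proof.
  intros HN Hf.
  pose proof (qexpansion_vanishes_at_cusp _ 1 c _ Rlt_0_1 (qexpansion_drop_leading NN c f HN Hf)) as H0.
  apply (filterlim_ext (fun s => e2pii (s * RtoC (c/24)) * (f s - e2pii (s * RtoC (- (c/24)))) + RtoC 1)%C).
  { intro s. rewrite <- (e2pii_mul_opp s (c/24)). ring. }
  replace (locally (RtoC 1)) with (locally (RtoC 0 + RtoC 1)%C) by (f_equal; ring).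
  apply (lim_plus at_cusp); [exact H0|apply filterlim_const].
Qed.

Definition fsum (l : list nat) (f : nat -> C) : C := fold_right Cplus (RtoC 0) (map f l).

Lemma CsumI_fsum (m : nat) (f : nat -> C) : CsumI m f = fsum (seq 0 m) f.
Proof. reflexivity. Qed.

Lemma fsum_ext (l : list nat) (f g : nat -> C) :
  (forall b, In b l -> f b = g b) -> fsum l f = fsum l g.
Proof.
  induction l as [|x l IH]; intro Hfg; [reflexivity|]. unfold fsum; simpl.
  rewrite (Hfg x (or_introl eq_refl)). f_equal. apply IH. intros b Hb. apply Hfg. right; exact Hb.
Qed.

Lemma fsum_scal (l : list nat) (k : C) (f : nat -> C) :
  fsum l (fun b => k * f b)%C = (k * fsum l f)%C.
Proof. induction l as [|x l IH]; unfold fsum in *; simpl; [|rewrite IH]; ring. Qed.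

Lemma fsum_zero (l : list nat) (f : nat -> C) :
  (forall b, In b l -> f b = RtoC 0) -> fsum l f = RtoC 0.
Proof.
  intro Hf. rewrite (fsum_ext l f (fun _ => RtoC 0) Hf). clear Hf.
  induction l as [|x l IH]; [reflexivity|]. unfold fsum in *; simpl. rewrite IH. ring.
Qed.

Lemma fsum_lim {T : Type} (F : (T -> Prop) -> Prop) {FF : Filter F}
  (l : list nat) (f : nat -> T -> C) (L : nat -> C) :
  (forall b, In b l -> filterlim (f b) F (locally (L b))) ->
  filterlim (fun t => fsum l (fun b => f b t)) F (locally (fsum l L)).
Proof.
  induction l as [|x l IH]; intro Hf; unfold fsum in *; simpl.
  - apply filterlim_const.
  - apply (lim_plus F); [apply Hf; left; reflexivity|]. apply IH. intros b Hb. apply Hf. right; exact Hb.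
Qed.

Definition vacuum_delta (a : nat) : C := if Nat.eqb a 0 then RtoC 1 else RtoC 0.

Lemma fsum_vacuum_delta (m : nat) (f : nat -> C) : (0 < m)%nat ->
  fsum (seq 0 m) (fun b => f b * vacuum_delta b)%C = f 0%nat.
Proof.
  intro Hm. destruct m as [|m]; [lia|]. unfold fsum; simpl.
  fold (fsum (seq 1 m) (fun b => f b * vacuum_delta b)%C).
  rewrite fsum_zero; [unfold vacuum_delta; simpl; ring|].
  intros b Hb. apply in_seq in Hb. unfold vacuum_delta. destruct (Nat.eqb_spec b 0); [lia|ring].
Qed.

Lemma RsumI_pos (m : nat) (d : nat -> R) : (0 < m)%nat -> (forall a, (a < m)%nat -> 0 < d a) ->
  0 < RsumI m (fun b => d b ^ 2).
Proof.
  intros Hm Hd. unfold RsumI.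
  assert (Hnonneg : forall s k, 0 <= fold_right Rplus 0 (map (fun b => d b ^ 2) (seq s k))).
  { intros s k. revert s. induction k as [|k IH]; intro s; cbn [seq map fold_right]; [lra|].
    pose proof (pow2_ge_0 (d s)). pose proof (IH (S s)). lra. }
  destruct m as [|m]; [lia|]. cbn [seq map fold_right].
  pose proof (Hnonneg 1%nat m). pose proof (pow_lt _ 2 (Hd 0%nat Hm)). lra.
Qed.

(* The data of the theorem: labels 0..m-1 (vacuum 0), central charge c, weights h,
   quantum dimensions d, modular S-matrix Smat, characters chi with q-expansion
   multiplicities N, and the rotation parameter n. *)
Section CharacterAsymptotics.

Variables (m : nat) (c : R) (h d : nat -> R) (Smat : nat -> nat -> C)
  (chi : nat -> C -> C) (N : nat -> nat -> nat) (n : nat).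

Hypothesis Hm : (0 < m)%nat.
Hypothesis Hh0 : h 0%nat = 0.
Hypothesis Hhpos : forall a, (0 < a < m)%nat -> 0 < h a.
Hypothesis Hdpos : forall a, (a < m)%nat -> 0 < d a.
Hypothesis HS : forall a, (a < m)%nat ->
  Smat a 0%nat = RtoC (d a / sqrt (RsumI m (fun b => d b ^ 2))) /\
  Smat 0%nat a = RtoC (d a / sqrt (RsumI m (fun b => d b ^ 2))).
Hypothesis Hser : forall a (tau : C), (a < m)%nat -> 0 < Im tau ->
  is_series (fun k => (RtoC (INR (N a k)) * e2pii (tau * RtoC (h a - c / 24 + INR k)))%C) (chi a tau) /\
  ex_series (fun k => Cmod (RtoC (INR (N a k)) * e2pii (tau * RtoC (h a - c / 24 + INR k)))%C).
Hypothesis HN00 : N 0%nat 0%nat = 1%nat.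
Hypothesis HmodS : forall a (tau : C), (a < m)%nat -> 0 < Im tau ->
  chi a (Copp (Cinv tau)) = CsumI m (fun b => Smat a b * chi b tau)%C.
Hypothesis HmodT : forall a (tau : C), (a < m)%nat -> 0 < Im tau ->
  chi a (tau + RtoC 1)%C = (e2pii (RtoC (h a - c / 24)) * chi a tau)%C.
Hypothesis Hn : (1 <= n)%nat.

(* The normalized character g_a = q^{c/24} chi_a, whose q-expansion starts at q^{h_a}. *)
Definition normalized_chi (a : nat) (s : C) : C := (e2pii (s * RtoC (c/24)) * chi a s)%C.

Lemma chi_factor (a : nat) (s : C) : chi a s = (e2pii (s * RtoC (- (c/24))) * normalized_chi a s)%C.
Proof. unfold normalized_chi. rewrite Cmult_assoc, Cmult_comm with (y := e2pii _), e2pii_mul_opp. ring. Qed.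

Lemma normalized_chi_cusp_limit (a : nat) : (a < m)%nat ->
  filterlim (normalized_chi a) at_cusp (locally (vacuum_delta a)).
Proof.
  intro Ha. destruct a as [|a]; unfold normalized_chi, vacuum_delta; simpl.
  - apply (qexpansion_vacuum_limit (N 0%nat)); [exact HN00|].
    rewrite <- Hh0. exact (fun tau Ht => Hser 0%nat tau Ha Ht).
  - apply (qexpansion_vanishes_at_cusp (N (S a)) (h (S a))); [apply Hhpos; lia|].
    exact (fun tau Ht => Hser (S a) tau Ha Ht).
Qed.

Lemma S_row_cusp_limit {T : Type} (F : (T -> Prop) -> Prop) {FF : Filter F} (a : nat) (sg : T -> C) :
  filterlim sg F at_cusp ->
  filterlim (fun t => CsumI m (fun b => Smat a b * normalized_chi b (sg t))%C) F (locally (Smat a 0%nat)).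
Proof.
  intro Hsg. rewrite <- (fsum_vacuum_delta m (Smat a) Hm).
  apply (fsum_lim F (seq 0 m) (fun b t => Smat a b * normalized_chi b (sg t))%C).
  intros b Hb. apply in_seq in Hb. apply (lim_mult F); [apply filterlim_const|].
  eapply filterlim_comp; [exact Hsg|]. apply normalized_chi_cusp_limit. lia.
Qed.

Lemma S_row_factor (a : nat) (s : C) :
  CsumI m (fun b => Smat a b * chi b s)%C =
  (e2pii (s * RtoC (- (c/24))) * CsumI m (fun b => Smat a b * normalized_chi b s))%C.
Proof.
  rewrite !CsumI_fsum, <- fsum_scal. apply fsum_ext. intros b _. rewrite (chi_factor b s). ring.
Qed.

Lemma chi_translate (a : nat) (tau : C) (k : nat) : (a < m)%nat -> 0 < Im tau ->
  chi a (tau + RtoC (INR k))%C = (Cpow (e2pii (RtoC (h a - c / 24))) k * chi a tau)%C.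
Proof.
  intros Ha Ht. induction k as [|k IH].
  - simpl. replace (tau + RtoC 0)%C with tau by (destruct tau; C_components; ring). ring.
  - rewrite S_INR.
    replace (tau + RtoC (INR k + 1))%C with ((tau + RtoC (INR k)) + RtoC 1)%C
      by (destruct tau; C_components; ring).
    rewrite HmodT, IH; [simpl Cpow; ring|exact Ha|destruct tau; simpl in *; lra].
Qed.

(* The points where the characters are evaluated after the modular transformations:
   s_y = dual_point y, with i y - 1/n = -1/(n - 1/s_y), and i/y = inverted_point y,
   with i y = -1/(i/y). *)
Definition dual_point (y : R) : C := (RtoC (/ INR n) + Ci * RtoC (/ (INR n * INR n * y)))%C.
Definition inverted_point (y : R) : C := (Ci * RtoC (/ y))%C.

Lemma INR_n_pos : 0 < INR n.
Proof. apply lt_0_INR. lia. Qed.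

Lemma Im_dual_point (y : R) : Im (dual_point y) = / (INR n * INR n * y).
Proof. unfold dual_point. simpl. ring. Qed.

Lemma dual_point_at_cusp : filterlim dual_point (at_right 0) at_cusp.
Proof.
  apply (at_cusp_of_Im (at_right 0)). apply (filterlim_ext (fun y => / (INR n * INR n * y))).
  { intro y. symmetry. apply Im_dual_point. }
  pose proof INR_n_pos.
  eapply filterlim_comp; [apply scale_at_right; nra|exact filterlim_Rinv_0_right].
Qed.

Lemma inverted_point_at_cusp : filterlim inverted_point (at_right 0) at_cusp.
Proof.
  apply (at_cusp_of_Im (at_right 0)). apply (filterlim_ext Rinv); [intro y; unfold inverted_point; simpl; ring|].
  exact filterlim_Rinv_0_right.
Qed.

(* The matrix identity behind S T^n S: iy - 1/n = -1/(n - 1/s_y). *)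
Lemma shifted_axis_inversion (y : R) : 0 < y ->
  (Ci * RtoC y - RtoC (/ INR n))%C = (- / (- / dual_point y + RtoC (INR n)))%C.
Proof.
  intro Hy. pose proof INR_n_pos.
  assert (Hne : (Ci * RtoC y - RtoC (/ INR n))%C <> RtoC 0).
  { intro E. apply (f_equal Im) in E. simpl in E. lra. }
  assert (Hden : 0 < y * y * (INR n * INR n)) by (repeat apply Rmult_lt_0_compat; lra).
  replace (- / dual_point y + RtoC (INR n))%C with (- / (Ci * RtoC y - RtoC (/ INR n)))%C.
  - field. exact Hne.
  - unfold dual_point. C_components; field; repeat split; lra.
Qed.

Lemma imaginary_axis_inversion (y : R) : 0 < y -> (Ci * RtoC y)%C = (- / inverted_point y)%C.
Proof. intro Hy. unfold inverted_point. C_components; field; lra. Qed.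

Definition B_sum (y : R) : C := CsumI m (fun b => Smat 0%nat b * normalized_chi b (inverted_point y))%C.

Lemma chi_imaginary_axis (y : R) : 0 < y ->
  chi 0%nat (Ci * RtoC y)%C = (e2pii (inverted_point y * RtoC (- (c/24))) * B_sum y)%C.
Proof.
  intro Hy. rewrite (imaginary_axis_inversion y Hy), HmodS, S_row_factor; [reflexivity|exact Hm|].
  unfold inverted_point. simpl. rewrite Rmult_0_l, Rmult_1_l, Rplus_0_l. apply Rinv_0_lt_compat, Hy.
Qed.

Definition A_sum (y : R) : C :=
  CsumI m (fun b => Smat 0%nat b * Cpow (e2pii (RtoC (h b))) n *
                    CsumI m (fun b' => Smat b b' * normalized_chi b' (dual_point y)))%C.

Lemma chi_shifted_axis (y : R) : 0 < y ->
  chi 0%nat (Ci * RtoC y - RtoC (/ INR n))%C =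
  (e2pii (dual_point y * RtoC (- (c/24))) * e2pii (RtoC (INR n * - (c/24))) * A_sum y)%C.
Proof.
  intro Hy. pose proof INR_n_pos.
  assert (Hdual : 0 < Im (dual_point y)).
  { rewrite Im_dual_point. apply Rinv_0_lt_compat. repeat apply Rmult_lt_0_compat; lra. }
  pose proof (Im_oppinv _ Hdual) as Hinv.
  assert (Hshift : 0 < Im (- / dual_point y + RtoC (INR n))%C) by (simpl; simpl in Hinv; lra).
  rewrite (shifted_axis_inversion y Hy), HmodS by assumption.
  unfold A_sum. rewrite !CsumI_fsum, <- fsum_scal. apply fsum_ext. intros b Hb. apply in_seq in Hb.
  rewrite chi_translate, HmodS, S_row_factor, !Cpow_e2pii by (assumption || lia).
  replace (RtoC (h b - c / 24) * RtoC (INR n))%C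
    with (RtoC (h b) * RtoC (INR n) + RtoC (INR n * - (c / 24)))%C by (C_components; ring).
  rewrite e2pii_plus. ring.
Qed.

Definition phase_constant : C := e2pii (RtoC (- (2 / INR n + INR n) * (c / 24))).
Definition axis_weight (y : R) : R := exp (-(2*PI*((c/24)*(/y - /(INR n * INR n * y))))).

Lemma automorphy_factors (x y : R) : 0 < y ->
  (e2pii ((Ci * RtoC x + RtoC (/ INR n)) * RtoC (- (c / 24))) *
   (e2pii (dual_point y * RtoC (- (c / 24))) * e2pii (RtoC (INR n * - (c / 24)))))%C =
  (phase_constant * RtoC (axis_weight y) *
   e2pii (Ci * RtoC x * RtoC (- (c / 24))) * e2pii (inverted_point y * RtoC (- (c / 24))))%C.
Proof.
  intro Hy. pose proof INR_n_pos. unfold phase_constant, axis_weight.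
  rewrite <- e2pii_imag, <- !e2pii_plus. f_equal. unfold dual_point, inverted_point.
  C_components; field; repeat split; lra.
Qed.

(* What remains of T_1 after removing the automorphy factors: a ratio of normalized
   vacuum characters near the cusp and the quotient of the two S-transformed sums. *)
Definition vacuum_ratio (x : R) : C :=
  (normalized_chi 0 (Ci * RtoC x + RtoC (/ INR n)) * / normalized_chi 0 (Ci * RtoC x))%C.
Definition T1_reduced (p : R * R) : C :=
  (vacuum_ratio (fst p) * (A_sum (snd p) * / B_sum (snd p)))%C.

Lemma T1_factor (x y : R) : 0 < y -> normalized_chi 0 (Ci * RtoC x) <> RtoC 0 -> B_sum y <> RtoC 0 ->
  T1 (chi 0%nat) n x y = (phase_constant * RtoC (axis_weight y) * T1_reduced (x, y))%C.
Proof.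
  intros Hy Hgx HBy. unfold T1, T1_reduced, vacuum_ratio. cbn [fst snd].
  rewrite (chi_shifted_axis y Hy), (chi_imaginary_axis y Hy),
    (chi_factor 0 (Ci * RtoC x + RtoC (/ INR n))), (chi_factor 0 (Ci * RtoC x)).
  assert (Hregroup : forall e1 g1 e23 a e4 g2 e5 b w : C,
    (e1 * e23 = w * e4 * e5)%C -> e4 <> RtoC 0 -> e5 <> RtoC 0 -> g2 <> RtoC 0 -> b <> RtoC 0 ->
    (e1 * g1 * (e23 * a) / (e4 * g2 * (e5 * b)) = w * (g1 * / g2 * (a * / b)))%C).
  { intros e1 g1 e23 a e4 g2 e5 b w He He4 He5 Hg2 Hb.
    replace (e1 * g1 * (e23 * a))%C with ((e1 * e23) * g1 * a)%C by ring. rewrite He.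
    field. repeat split; assumption. }
  apply Hregroup; [apply automorphy_factors, Hy|apply e2pii_neq0|apply e2pii_neq0|exact Hgx|exact HBy].
Qed.

Lemma vacuum_ratio_limit : filterlim vacuum_ratio (Rbar_locally p_infty) (locally (RtoC 1)).
Proof.
  pose proof (normalized_chi_cusp_limit 0 Hm) as Hvac.
  assert (Haxis : forall r, filterlim (fun x => Ci * RtoC x + RtoC r)%C (Rbar_locally p_infty) at_cusp).
  { intros r P [M HM]. exists M. intros x Hx. apply HM. simpl. lra. }
  replace (locally (RtoC 1)) with (locally (RtoC 1 * / RtoC 1)%C) by (f_equal; field; apply RtoC_neq0; lra).
  unfold vacuum_ratio. apply (lim_mult _ _ _ (RtoC 1) (/ RtoC 1)%C).
  - exact (filterlim_comp _ _ _ _ (normalized_chi 0) _ at_cusp _ (Haxis _) Hvac).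
  - apply (lim_inv _ _ (RtoC 1)); [|apply RtoC_neq0; lra].
    apply (filterlim_comp _ _ _ (fun x => Ci * RtoC x)%C (normalized_chi 0) _ at_cusp); [|exact Hvac].
    eapply filterlim_ext; [|apply (Haxis 0)]. intro x. C_components; ring.
Qed.

Definition A_limit_value : C :=
  CsumI m (fun b => Smat 0%nat b * Cpow (e2pii (RtoC (h b))) n * Smat b 0%nat)%C.

(* Both S-transformed sums converge as y -> 0+, since every g_b tends to delta_{b,0}. *)
Lemma A_sum_limit : filterlim A_sum (at_right 0) (locally A_limit_value).
Proof.
  apply (fsum_lim (at_right 0) (seq 0 m)
           (fun b y => Smat 0%nat b * Cpow (e2pii (RtoC (h b))) n *
                       CsumI m (fun b' => Smat b b' * normalized_chi b' (dual_point y)))%C).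
  intros b _. apply (lim_mult (at_right 0)); [apply filterlim_const|].
  exact (S_row_cusp_limit _ b _ dual_point_at_cusp).
Qed.

Lemma B_sum_limit : filterlim B_sum (at_right 0) (locally (Smat 0%nat 0%nat)).
Proof. exact (S_row_cusp_limit _ 0 _ inverted_point_at_cusp). Qed.

Definition twisted_dimension_sum : C :=
  CsumI m (fun a => RtoC (d a ^ 2) * Cpow (e2pii (RtoC (h a))) n)%C.

Definition total_dimension : R := sqrt (RsumI m (fun b => d b ^ 2)).

Lemma total_dimension_pos : 0 < total_dimension.
Proof. apply sqrt_lt_R0, RsumI_pos; assumption. Qed.

(* S_{0b} S_{b0} = d_b^2 / D^2, so the limit of A_sum is Z / D^2. *)
Lemma A_limit_value_eq :
  A_limit_value = (RtoC (/ (total_dimension * total_dimension)) * twisted_dimension_sum)%C.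
Proof.
  pose proof total_dimension_pos as HD.
  unfold A_limit_value, twisted_dimension_sum. rewrite !CsumI_fsum, <- fsum_scal.
  apply fsum_ext. intros b Hb. apply in_seq in Hb.
  destruct (HS b ltac:(lia)) as [Hb0 H0b]. rewrite Hb0, H0b. fold total_dimension.
  destruct (Cpow (e2pii (RtoC (h b))) n). C_components; field; lra.
Qed.

Lemma S00_eq : Smat 0%nat 0%nat = RtoC (d 0%nat / total_dimension).
Proof. exact (proj1 (HS 0%nat Hm)). Qed.

Lemma S00_neq0 : Smat 0%nat 0%nat <> RtoC 0.
Proof.
  rewrite S00_eq. apply RtoC_neq0, Rgt_not_eq, Rdiv_lt_0_compat; [apply Hdpos, Hm|apply total_dimension_pos].
Qed.

Lemma T1_reduced_limit :
  filterlim T1_reduced (filter_prod (Rbar_locally p_infty) (at_right 0))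
    (locally (RtoC (/ (total_dimension * d 0%nat)) * twisted_dimension_sum)%C).
Proof.
  pose proof total_dimension_pos as HD. pose proof (Hdpos 0%nat Hm) as Hd0.
  replace (RtoC (/ (total_dimension * d 0%nat)) * twisted_dimension_sum)%C
    with (RtoC 1 * (A_limit_value * / Smat 0%nat 0%nat))%C.
  2: { rewrite A_limit_value_eq, S00_eq. destruct twisted_dimension_sum as [u v].
       C_components; field; lra. }
  apply (lim_mult (filter_prod _ _)).
  - apply (filterlim_comp _ _ _ fst vacuum_ratio _ (Rbar_locally p_infty));
      [apply filterlim_fst|exact vacuum_ratio_limit].
  - apply (filterlim_comp _ _ _ snd (fun y => A_sum y * / B_sum y)%C _ (at_right 0));
      [apply filterlim_snd|].
    apply (lim_mult (at_right 0)); [exact A_sum_limit|].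
    exact (lim_inv _ _ _ B_sum_limit S00_neq0).
Qed.

Hypothesis HZ : twisted_dimension_sum <> RtoC 0.

Lemma T1_reduced_limit_neq0 : (RtoC (/ (total_dimension * d 0%nat)) * twisted_dimension_sum)%C <> RtoC 0.
Proof.
  pose proof total_dimension_pos. pose proof (Hdpos 0%nat Hm).
  apply Cmult_neq_0; [apply RtoC_neq0, Rgt_not_eq, Rinv_0_lt_compat; nra|exact HZ].
Qed.

Lemma T1_eventually_factored :
  filter_prod (Rbar_locally p_infty) (at_right 0)
    (fun p => T1 (chi 0%nat) n (fst p) (snd p) =
              (phase_constant * RtoC (axis_weight (snd p)) * T1_reduced p)%C /\
              T1_reduced p <> RtoC 0).
Proof.
  apply filter_and; [|exact (lim_neq0 _ _ _ T1_reduced_limit T1_reduced_limit_neq0)].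
  apply (Filter_prod _ _ _ (fun x => normalized_chi 0 (Ci * RtoC x) <> RtoC 0) (fun y => 0 < y /\ B_sum y <> RtoC 0)).
  - apply (lim_neq0 _ _ (RtoC 1)); [|apply RtoC_neq0; lra].
    eapply filterlim_comp; [|exact (normalized_chi_cusp_limit 0 Hm)].
    intros P [M HM]. exists M. intros x Hx. apply HM. simpl. lra.
  - apply filter_and; [exists (mkposreal 1 Rlt_0_1); intros y _ Hy; exact Hy|].
    exact (lim_neq0 _ _ _ B_sum_limit S00_neq0).
  - intros x y Hgx [Hy HBy]. apply T1_factor; assumption.
Qed.

Lemma T1_eventually_nonzero :
  filter_prod (Rbar_locally p_infty) (at_right 0) (fun p => T1 (chi 0%nat) n (fst p) (snd p) <> RtoC 0).
Proof.
  eapply filter_imp; [|exact T1_eventually_factored]. intros p [-> Hne].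
  apply Cmult_neq_0; [apply Cmult_neq_0; [apply e2pii_neq0|]|exact Hne].
  apply RtoC_neq0, Rgt_not_eq, exp_pos.
Qed.

Lemma T1_phase_limit :
  filterlim (fun p => phase (T1 (chi 0%nat) n (fst p) (snd p)))
    (filter_prod (Rbar_locally p_infty) (at_right 0))
    (locally (phase_constant * phase twisted_dimension_sum)%C).
Proof.
  apply (filterlim_ext_loc (fun p => phase_constant * phase (T1_reduced p))%C).
  - eapply filter_imp; [|exact T1_eventually_factored]. intros p [-> Hne].
    symmetry. apply phase_scale; [|apply exp_pos|exact Hne].
    unfold phase_constant. rewrite Cmod_e2pii. simpl. rewrite Rmult_0_r, Ropp_0. apply exp_0.
  - pose proof total_dimension_pos. pose proof (Hdpos 0%nat Hm).
    rewrite <- (phase_pos_scale twisted_dimension_sum (/ (total_dimension * d 0%nat)));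
      [|apply Rinv_0_lt_compat; nra|exact HZ].
    apply (lim_mult (filter_prod _ _)); [apply filterlim_const|].
    exact (lim_phase _ _ _ T1_reduced_limit T1_reduced_limit_neq0).
Qed.

End CharacterAsymptotics.

Theorem mainTheorem1
  (m : nat)
  (c : R) (h : nat -> R) (d : nat -> R) (S : nat -> nat -> C)
  (chi : nat -> C -> C) (N : nat -> nat -> nat) (n : nat)
  (Hm : (0 < m)%nat)
  (Hh0 : h 0%nat = 0)
  (Hhpos : forall a, (0 < a < m)%nat -> 0 < h a)
  (Hdpos : forall a, (a < m)%nat -> 0 < d a)
  (HS : forall a, (a < m)%nat ->
          S a 0%nat = RtoC (d a / sqrt (RsumI m (fun b => d b ^ 2))) /\
          S 0%nat a = RtoC (d a / sqrt (RsumI m (fun b => d b ^ 2))))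
  (Hholo : forall a (tau : C), (a < m)%nat -> 0 < Im tau ->
          ex_derive (K := C_AbsRing) (V := C_NormedModule) (chi a) tau)
  (Hser : forall a (tau : C), (a < m)%nat -> 0 < Im tau ->
          is_series (fun k => (RtoC (INR (N a k)) *
                       e2pii (tau * RtoC (h a - c / 24 + INR k)))%C) (chi a tau) /\
          ex_series (fun k => Cmod (RtoC (INR (N a k)) *
                       e2pii (tau * RtoC (h a - c / 24 + INR k)))%C))
  (HN0 : forall a, (a < m)%nat -> (1 <= N a 0%nat)%nat)
  (HN00 : N 0%nat 0%nat = 1%nat)
  (HmodS : forall a (tau : C), (a < m)%nat -> 0 < Im tau ->
          chi a (Copp (Cinv tau)) = CsumI m (fun b => S a b * chi b tau)%C)
  (HmodT : forall a (tau : C), (a < m)%nat -> 0 < Im tau ->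
          chi a (tau + RtoC 1)%C = (e2pii (RtoC (h a - c / 24)) * chi a tau)%C)
  (Hn : (1 <= n)%nat)
  (Hsum : CsumI m (fun a => RtoC (d a ^ 2) * Cpow (e2pii (RtoC (h a))) n)%C <> RtoC 0) :
  let Z := CsumI m (fun a => RtoC (d a ^ 2) * Cpow (e2pii (RtoC (h a))) n)%C in
  filter_prod (Rbar_locally p_infty) (at_right 0)
    (fun p => T1 (chi 0%nat) n (fst p) (snd p) <> RtoC 0) /\
  filterlim (fun p => (T1 (chi 0%nat) n (fst p) (snd p) /
                       RtoC (Cmod (T1 (chi 0%nat) n (fst p) (snd p))))%C)
    (filter_prod (Rbar_locally p_infty) (at_right 0))
    (locally (e2pii (RtoC (- (2 / INR n + INR n) * (c / 24))) * (Z / RtoC (Cmod Z)))%C).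

Proof.
  intros Z. split.
  - exact (T1_eventually_nonzero m c h d S chi N n Hm Hh0 Hhpos Hdpos HS Hser HN00 HmodS HmodT Hn Hsum).
  - exact (T1_phase_limit m c h d S chi N n Hm Hh0 Hhpos Hdpos HS Hser HN00 HmodS HmodT Hn Hsum).
Qed.
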